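(* Let $X$ be a nonnegative random variable and $0<\theta\le1$. Then $X\in\mathcal{L}^{1/\theta}$ if and only if $\mathbb{P}(X>x-\xi x^{1-\theta})\sim\mathbb{P}(X>x)$ as $x\to\infty$ for all $\xi\in\mathbb{R}$.
   Context: Class $\mathcal{L}$: nonnegative $Z$ with $\mathbb{P}(Z>x)>0$ for all $x\ge0$ and $\mathbb{P}(Z>x+y)/\mathbb{P}(Z>x)\to1$ for some (equivalently all) $y>0$. $X\in\mathcal{L}^p$ ($p\ge1$) means $X\ge0$ and $X^{1/p}\in\mathcal{L}$. $f\sim g$ means $f(x)/g(x)\to1$. *)

From HB Require Import structures.
From mathcomp Require Import all_boot all_order all_algebra.
From mathcomp Require Import all_classical all_reals all_analysis.
Set Implicit Arguments. Unset Strict Implicit. Unset Printing Implicit Defensive.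
Import Order.TTheory GRing.Theory Num.Theory.
Import numFieldNormedType.Exports.
Local Open Scope classical_set_scope.
Local Open Scope ring_scope.

Definition tailP d (T : measurableType d) (R : realType)
  (P : probability T R) (Z : T -> R) (x : R) : R :=
  fine (P [set t | x < Z t]).

Definition asymp_equiv (R : realType) (f g : R -> R) : Prop :=
  (fun x => f x / g x) @ +oo --> (1 : R).

Definition classL d (T : measurableType d) (R : realType)
  (P : probability T R) (Z : T -> R) : Prop :=
  [/\ (forall t, 0 <= Z t),
      (forall x, 0 <= x -> 0 < tailP P Z x) &
      exists2 y : R, 0 < y &
        asymp_equiv (fun x => tailP P Z (x + y)) (tailP P Z)].

Definition classLp d (T : measurableType d) (R : realType)
  (p : R) (P : probability T R) (X : T -> R) : Prop :=
  (forall t, 0 <= X t) /\ classL P (fun t => X t `^ (1 / p)).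

From HB Require Import structures.
From mathcomp Require Import all_boot all_order all_algebra.
From mathcomp Require Import all_classical all_reals all_analysis.
From mathcomp Require Import ring lra.
Import Order.TTheory GRing.Theory Num.Theory.
Import numFieldNormedType.Exports.
Local Open Scope classical_set_scope.
Local Open Scope ring_scope.

(* Put p = 1/theta >= 1, F(x) = P(X > x) and G(u) = F(u^p), the tail of X^theta.
   Substituting x = u^p turns x - xi x^(1-theta) into u^p - xi u^(p-1), and for
   large u the convexity bounds (u - xi)^p <= u^p - xi u^(p-1) (xi >= 0),
   u^p - xi u^(p-1) <= (u - xi)^p (xi <= 0) and (u + 1)^p <= u^p + K u^(p-1)
   sandwich F(x - xi x^(1-theta)) / F(x) between 1 and G(u - xi) / G(u), resp.
   G(u + 1) / G(u) between F(x + K x^(1-theta)) / F(x) and 1.  Hence the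
   condition for all xi is equivalent to G(u + c) / G(u) -> 1 for all c, which
   for a nonincreasing positive G is the long-tailedness of X^theta; positivity
   of F follows from the case xi = 0, since 0/0 = 0 in the ratio. *)

Lemma exprD1_le_lin {R : realDomainType} (t : R) (n : nat) : 0 <= t <= 1 ->
  (1 + t) ^+ n <= 1 + (2 ^+ n - 1) * t.
Proof.
case/andP=> t_ge0 t_le1; elim: n => [|n IH].
  by rewrite !expr0 subrr mul0r addr0.
rewrite exprSr; apply: le_trans (ler_wpM2r (addr_ge0 ler01 t_ge0) IH) _.
have : 1 <= (2 : R) ^+ n by rewrite exprn_ege1 // ler1n.
rewrite exprS; set a := (2 : R) ^+ n => a_ge1.
have a1_ge0 : 0 <= a - 1 by rewrite subr_ge0.
have t1_ge0 : 0 <= 1 - t by rewrite subr_ge0.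
have := mulr_ge0 (mulr_ge0 a1_ge0 t_ge0) t1_ge0; nra.
Qed.

Section powR_shift_bounds.
Context {R : realType} {p : R}.
Hypothesis p_ge1 : 1 <= p.

Let p_gt0 : 0 < p. Proof. exact: lt_le_trans ltr01 p_ge1. Qed.

Lemma powR_addr_factor (u c : R) : 0 < u -> 0 <= 1 + c / u ->
  (u + c) `^ p = u `^ p * (1 + c / u) `^ p.
Proof.
move=> u_gt0 t_ge0; rewrite -powRM ?(ltW u_gt0) //.
by congr (_ `^ _); field; rewrite gt_eqF.
Qed.

Lemma powR_mul1D (u c : R) : 0 < u ->
  u `^ p * (1 + c / u) = u `^ p + c * u `^ (p - 1).
Proof.
move=> u_gt0; rewrite -(mulr_powRB1 (ltW u_gt0) p_gt0).
by field; rewrite gt_eqF.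
Qed.

Lemma powR_addr_ge (u c : R) : 0 < u -> 0 <= c ->
  u `^ p + c * u `^ (p - 1) <= (u + c) `^ p.
Proof.
move=> u_gt0 c_ge0; have t_ge0 : 0 <= c / u by rewrite divr_ge0 // ltW.
rewrite powR_addr_factor ?addr_ge0 // -powR_mul1D //.
by rewrite ler_wpM2l ?powR_ge0 // le1r_powR // lerDl.
Qed.

Lemma powR_addr_le (u c : R) : 0 < u -> - u <= c -> c <= 0 ->
  (u + c) `^ p <= u `^ p + c * u `^ (p - 1).
Proof.
move=> u_gt0 uc c_le0.
have t_ge0 : 0 <= 1 + c / u.
  by rewrite -lerBlDl sub0r ler_pdivlMr // mulN1r.
rewrite powR_addr_factor // -powR_mul1D // ler_wpM2l ?powR_ge0 //.
move: t_ge0; rewrite le_eqVlt => /orP[/eqP <-|t_gt0].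
  by rewrite powR0 // gt_eqF.
by rewrite ge1r_powR // t_gt0 /= gerDl mulr_le0_ge0 // invr_ge0 ltW.
Qed.

(* [K = 2^n] for an integer [n >= p]: [(1 + 1/u)^p <= (1 + 1/u)^n <= 1 + 2^n / u]. *)
Lemma powR_addr1_le : exists2 K : R, 0 <= K &
  forall u, 1 <= u -> (u + 1) `^ p <= u `^ p + K * u `^ (p - 1).
Proof.
have := archi_boundP (ltW p_gt0); set n := Num.bound p => p_lt_n.
exists (2 ^+ n); first by rewrite exprn_ge0.
move=> u u_ge1; have u_gt0 : 0 < u by exact: lt_le_trans ltr01 u_ge1.
have t_ge0 : 0 <= 1 / u by rewrite divr_ge0 // ltW.
have t_le1 : 1 / u <= 1 by rewrite ler_pdivrMr // mul1r.
rewrite powR_addr_factor ?addr_ge0 // -powR_mul1D //.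
rewrite ler_wpM2l ?powR_ge0 //.
have t1_ge1 : 1 <= 1 + 1 / u by rewrite lerDl.
apply: le_trans (ler_powR t1_ge1 (ltW p_lt_n)) _.
rewrite powR_mulrn ?addr_ge0 //.
have t01 : 0 <= 1 / u <= 1 by rewrite t_ge0.
apply: le_trans (exprD1_le_lin _ n t01) _.
by rewrite lerD2l mulrA mulr1 ler_wpM2r ?invr_ge0 ?ltW // gtrBl.
Qed.

End powR_shift_bounds.

Section powR_pinfty.
Context {R : realType} {q : R}.
Hypothesis q_gt0 : 0 < q.

Lemma powRK_inv {x : R} : 0 <= x -> (x `^ q^-1) `^ q = x.
Proof. by move=> x_ge0; rewrite -powRrM mulVf ?gt_eqF // powRr1. Qed.

Lemma powR_cvgy : u `^ q @[u --> +oo] --> +oo.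
Proof.
apply/cvgryPge => A; near=> u.
have B_ge0 : 0 <= Num.max A 0 by rewrite le_max lexx orbT.
have A_le : A <= Num.max A 0 by rewrite le_max lexx.
apply: le_trans A_le _; rewrite -(powRK_inv B_ge0).
have uB : Num.max A 0 `^ q^-1 <= u.
  by near: u; apply: nbhs_pinfty_ge; rewrite num_real.
by rewrite ge0_ler_powR ?ltW ?nnegrE ?powR_ge0 //; exact: le_trans uB.
Unshelve. all: end_near. Qed.

End powR_pinfty.

Lemma cvg_pinfty_powR {R : realType} {q : R} : 0 < q -> forall (h : R -> R) (l : R),
  h (u `^ q) @[u --> +oo] --> l <-> h x @[x --> +oo] --> l.
Proof.
move=> q_gt0 h l; split=> hl; last by apply: cvg_comp hl; exact: powR_cvgy.
have qV_gt0 : 0 < q^-1 by rewrite invr_gt0.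
have := cvg_comp _ _ (powR_cvgy qV_gt0) hl.
apply: cvg_trans; apply: near_eq_cvg; near=> x => /=.
rewrite powRK_inv //; near: x; apply: nbhs_pinfty_ge; rewrite num_real.
Unshelve. all: end_near. Qed.

Section long_tailed_shift.
Context {R : realType}.
Variable G : R -> R.
Hypothesis G_gt0 : forall u, 0 <= u -> 0 < G u.
Hypothesis G_le : forall a b, 0 <= a -> a <= b -> G b <= G a.
Local Notation ratio c := (fun u => G (u + c) / G u).

Lemma shift_ratio_comp (c y : R) : ratio y @ +oo --> (1 : R) ->
  (fun u => G (u + c + y) / G (u + c)) @ +oo --> (1 : R).
Proof. by move=> hy; apply: cvg_comp hy; exact: cvg_addrr. Qed.

Lemma shift_ratio_natmul_cvg (y : R) : ratio y @ +oo --> (1 : R) ->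
  forall n : nat, ratio (n%:R * y) @ +oo --> (1 : R).
Proof.
move=> hy; elim=> [|n IH].
  have : @cst R R 1 @ +oo --> (1 : R) by exact: cvg_cst.
  apply: cvg_trans.
  apply: near_eq_cvg; near=> u.
  by rewrite mul0r addr0 divff // gt_eqF // G_gt0.
have prod_cvg := cvgM (shift_ratio_comp (n%:R * y) _ hy) IH; rewrite mulr1 in prod_cvg.
apply: cvg_trans (prod_cvg _); apply: near_eq_cvg; near=> u => /=.
rewrite mulrA divfK; first by rewrite -addrA -natr1 mulrDl mul1r.
rewrite gt_eqF // G_gt0 // -lerBlDr sub0r.
by near: u; apply: nbhs_pinfty_ge; rewrite num_real.
Unshelve. all: end_near. Qed.

Lemma shift_ratio_le1 (u c : R) : 0 <= u -> 0 <= c -> G (u + c) / G u <= 1.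
Proof.
by move=> u_ge0 c_ge0; rewrite ler_pdivrMr ?G_gt0 // mul1r G_le // lerDl.
Qed.

(* Shifts by [c >= 0] are squeezed between shifts by [0] and by some [n * y >= c];
   negative shifts are inverses of positive ones. *)
Lemma shift_ratio_cvg (y : R) : 0 < y -> ratio y @ +oo --> (1 : R) ->
  forall c, ratio c @ +oo --> (1 : R).
Proof.
move=> y_gt0 hy.
have ratio_ge0_cvg c : 0 <= c -> ratio c @ +oo --> (1 : R).
  move=> c_ge0; have := archi_boundP (divr_ge0 c_ge0 (ltW y_gt0)).
  set n := Num.bound _ => cn; have c_le : c <= n%:R * y by rewrite -ler_pdivrMr // ltW.
  apply: (@squeeze_cvgr _ _ _ _ (ratio (n%:R * y)) (cst 1)); last 2 first.
  - exact: shift_ratio_natmul_cvg.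
  - exact: cvg_cst.
  near=> u.
  have u_ge0 : 0 <= u by near: u; apply: nbhs_pinfty_ge; rewrite num_real.
  rewrite shift_ratio_le1 // andbT ler_pM2r ?invr_gt0 ?G_gt0 //.
  by rewrite G_le ?lerD2l // addr_ge0.
move=> c; have [c_ge0|c_lt0] := leP 0 c; first exact: ratio_ge0_cvg.
have nc_ge0 : 0 <= - c by rewrite oppr_ge0 ltW.
have inv_cvg := cvgV (oner_neq0 _) (shift_ratio_comp c _ (ratio_ge0_cvg _ nc_ge0)).
rewrite invr1 in inv_cvg.
apply: cvg_trans (inv_cvg _); apply: near_eq_cvg; near=> u => /=.
by rewrite addrK invf_div.
Unshelve. all: end_near. Qed.

End long_tailed_shift.

Lemma divff_cvg1_gt0 (R : realType) (F : R -> R) :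
  (forall x, 0 <= F x) -> (forall a b, a <= b -> F b <= F a) ->
  (fun x => F x / F x) @ +oo --> (1 : R) -> forall x, 0 < F x.
Proof.
move=> F_ge0 F_le hF x0.
have : \forall x \near +oo, x0 <= x /\ F x / F x != 0.
  near=> x; split; last by near: x; exact: cvgr_neq0 hF (oner_neq0 _).
  by near: x; apply: nbhs_pinfty_ge; rewrite num_real.
case/filter_ex => x [x0x Fx_neq0].
apply: lt_le_trans (F_le _ _ x0x); rewrite lt_neqAle F_ge0 andbT eq_sym.
by apply: contraNneq Fx_neq0 => ->; rewrite mul0r.
Unshelve. all: end_near. Qed.

Section powR_shift_transfer.
Context {R : realType} {p : R}.
Variable F : R -> R.
Hypothesis p_ge1 : 1 <= p.
Hypothesis F_le : forall a b, a <= b -> F b <= F a.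
Local Notation G := (fun u => F (u `^ p)).

Let p_gt0 : 0 < p. Proof. exact: lt_le_trans ltr01 p_ge1. Qed.

Lemma comp_powR_le (a b : R) : 0 <= a -> a <= b -> G b <= G a.
Proof.
move=> a_ge0 ab; have b_ge0 : 0 <= b by exact: le_trans ab.
by apply: F_le; apply: ge0_ler_powR; rewrite ?nnegrE // ltW.
Qed.

Lemma powR_shift_ratio_cvg : (forall u, 0 <= u -> 0 < G u) ->
  (forall c, (fun u => G (u + c) / G u) @ +oo --> (1 : R)) ->
  forall c, (fun u => F (u `^ p + c * u `^ (p - 1)) / G u) @ +oo --> (1 : R).
Proof.
move=> G_gt0 hG c.
have [c_le0|c_gt0] := leP c 0.
- apply: (@squeeze_cvgr _ _ _ _ (cst 1) (fun u => G (u + c) / G u)); last 2 first.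
  + exact: cvg_cst.
  + exact: hG.
  near=> u; have u_gt0 : 0 < u by near: u; apply: nbhs_pinfty_gt; rewrite num_real.
  have u_ge0 := ltW u_gt0.
  have cu : - c <= u by near: u; apply: nbhs_pinfty_ge; rewrite num_real.
  apply/andP; split.
    rewrite /= ler_pdivlMr ?G_gt0 // mul1r.
    by apply: F_le; rewrite gerDl mulr_le0_ge0 ?powR_ge0.
  rewrite ler_pM2r ?invr_gt0 ?G_gt0 //.
  by apply: F_le; apply: powR_addr_le; rewrite // lerNl.
- apply: (@squeeze_cvgr _ _ _ _ (fun u => G (u + c) / G u) (cst 1)); last 2 first.
  + exact: hG.
  + exact: cvg_cst.
  near=> u; have u_gt0 : 0 < u by near: u; apply: nbhs_pinfty_gt; rewrite num_real.
  have u_ge0 := ltW u_gt0.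
  apply/andP; split.
    rewrite ler_pM2r ?invr_gt0 ?G_gt0 //.
    by apply: F_le; apply: powR_addr_ge; rewrite // ltW.
  rewrite /= ler_pdivrMr ?G_gt0 // mul1r.
  by apply: F_le; rewrite lerDl mulr_ge0 ?powR_ge0 // ltW.
Unshelve. all: end_near. Qed.

Lemma powR_shift1_ratio_cvg : (forall x, 0 < F x) ->
  (forall c, (fun u => F (u `^ p + c * u `^ (p - 1)) / G u) @ +oo --> (1 : R)) ->
  (fun u => G (u + 1) / G u) @ +oo --> (1 : R).
Proof.
move=> F_gt0 hF; have [K K_ge0 hK] := powR_addr1_le p_ge1.
apply: (@squeeze_cvgr _ _ _ _ (fun u => F (u `^ p + K * u `^ (p - 1)) / G u) (cst 1)).
- near=> u; have u_ge1 : 1 <= u by near: u; apply: nbhs_pinfty_ge; rewrite num_real.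
  have u_ge0 : 0 <= u by exact: le_trans ler01 u_ge1.
  apply/andP; split.
    by rewrite ler_pM2r ?invr_gt0 //; apply: F_le; exact: hK.
  by rewrite /= ler_pdivrMr // mul1r comp_powR_le ?lerDl.
- exact: hF.
- exact: cvg_cst.
Unshelve. all: end_near. Qed.

End powR_shift_transfer.

Section tail_probability.
Variables (d : measure_display) (T : measurableType d) (R : realType).
Variables (P : probability T R) (X : {RV P >-> R}).

Lemma measurable_tail (x : R) : measurable [set t | x < X t].
Proof.
rewrite -[X in measurable X]setTI.
have -> : [set t | x < X t] = X @^-1` `]x, +oo[.
  by apply/seteqP; split => t /=; rewrite in_itv /= andbT.
exact: (measurable_funP X) measurableT _ (measurable_itv _).
Qed.

Lemma tailP_ge0 (x : R) : 0 <= tailP P X x.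
Proof. by rewrite fine_ge0. Qed.

Lemma tailP_le (a b : R) : a <= b -> tailP P X b <= tailP P X a.
Proof.
move=> ab; rewrite fine_le ?fin_num_measure //; try exact: measurable_tail.
apply: le_measure; rewrite ?inE; try exact: measurable_tail.
by move=> t /=; exact: le_lt_trans.
Qed.

End tail_probability.

Lemma tailP_powR d (T : measurableType d) (R : realType) (P : probability T R)
    (X : T -> R) (q u : R) : 0 < q -> (forall t, 0 <= X t) -> 0 <= u ->
  tailP P (fun t => X t `^ q) u = tailP P X (u `^ q^-1).
Proof.
move=> q_gt0 X_ge0 u_ge0; rewrite /tailP; congr (fine (P _)).
have qV_gt0 : 0 < q^-1 by rewrite invr_gt0.
apply/seteqP; split => t /= ltu.
- rewrite -[X t](powRK_inv qV_gt0) ?invrK //.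
  by apply: gt0_ltr_powR; rewrite ?nnegrE ?powR_ge0.
- rewrite -(powRK_inv q_gt0 u_ge0).
  by apply: gt0_ltr_powR; rewrite ?nnegrE ?powR_ge0.
Qed.

Lemma asymp_equiv_powR_shift (R : realType) (F : R -> R) (theta xi : R) :
  0 < theta ->
  asymp_equiv (fun x => F (x - xi * x `^ (1 - theta))) F <->
  (fun u => F (u `^ theta^-1 + - xi * u `^ (theta^-1 - 1)) / F (u `^ theta^-1))
    @ +oo --> (1 : R).
Proof.
move=> th_gt0; have p_gt0 : 0 < theta^-1 by rewrite invr_gt0.
have powE u : (u `^ theta^-1) `^ (1 - theta) = u `^ (theta^-1 - 1).
  by rewrite -powRrM mulrBr mulr1 mulVf ?gt_eqF.
rewrite /asymp_equiv -(cvg_pinfty_powR p_gt0).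
by under eq_fun do rewrite powE -mulNr.
Qed.

Lemma asymp_equiv_tailP_powR_shift d (T : measurableType d) (R : realType)
    (P : probability T R) (X : T -> R) (q y : R) :
  0 < q -> (forall t, 0 <= X t) -> 0 <= y ->
  asymp_equiv (fun x => tailP P (fun t => X t `^ q) (x + y))
              (tailP P (fun t => X t `^ q)) <->
  (fun u => tailP P X ((u + y) `^ q^-1) / tailP P X (u `^ q^-1)) @ +oo --> (1 : R).
Proof.
move=> q_gt0 X_ge0 y_ge0; rewrite /asymp_equiv.
by split; apply: cvg_trans; apply: near_eq_cvg; near=> u;
  rewrite !tailP_powR ?addr_ge0 //; near: u; apply: nbhs_pinfty_ge; rewrite num_real.
Unshelve. all: end_near. Qed.

Theorem lemmaA2 (d : measure_display) (T : measurableType d) (R : realType)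
  (P : probability T R) (X : {RV P >-> R}) (theta : R) :
  (forall t, 0 <= X t) -> 0 < theta -> theta <= 1 ->
  (classLp (1 / theta) P X <->
   forall xi : R,
     asymp_equiv (fun x => tailP P X (x - xi * x `^ (1 - theta))) (tailP P X)).
Proof.
move=> X_ge0 th_gt0 th_le1.
have p_ge1 : 1 <= theta^-1 by rewrite invf_ge1.
have F_le := @tailP_le _ _ _ P X.
have long_tailE y := asymp_equiv_tailP_powR_shift _ _ _ P X theta y th_gt0 X_ge0.
rewrite /classLp /classL (_ : 1 / (1 / theta) = theta); last by rewrite !div1r invrK.
split.
- case=> _ [_ Y_gt0 [y y_gt0 /(long_tailE _ (ltW y_gt0)) Yy]] xi.
  have G_gt0 u : 0 <= u -> 0 < tailP P X (u `^ theta^-1).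
    by move=> u_ge0; rewrite -tailP_powR // Y_gt0.
  have G_le := comp_powR_le _ p_ge1 F_le.
  rewrite asymp_equiv_powR_shift //; apply: powR_shift_ratio_cvg => //.
  exact: (shift_ratio_cvg _ G_gt0 G_le _ y_gt0 Yy).
- move=> equiv; have F_gt0 : forall x, 0 < tailP P X x.
    apply: divff_cvg1_gt0 (@tailP_ge0 _ _ _ P X) F_le _.
    by have := equiv 0; rewrite /asymp_equiv; under eq_fun do rewrite mul0r subr0.
  split=> //; split; first by move=> t; exact: powR_ge0.
    by move=> x x_ge0; rewrite tailP_powR.
  exists 1 => //; apply/long_tailE => //.
  apply: powR_shift1_ratio_cvg p_ge1 F_le F_gt0 _ => c.
  by rewrite -[c]opprK -asymp_equiv_powR_shift.
Qed.
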